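(* For every formula $\varphi$ of $\mathcal L^{\bigcirc}_\square$: $\varphi$ is derivable in $\mathbf{K4C}$ if and only if $\varphi$ is valid, with respect to the $d$-semantics, on every dynamic topological system $\langle X,\tau,f\rangle$ whose underlying space $\langle X,\tau\rangle$ is a $T_D$ space.
   Context: Fix a non-empty set $\mathsf{PV}$ of propositional variables. The language $\mathcal L^{\bigcirc}_\square$ is given by $\varphi::= p\mid \varphi\wedge\varphi\mid\neg\varphi\mid\square\varphi\mid\bigcirc\varphi$ with $p\in\mathsf{PV}$. Axioms and rules: Taut; K: $\square(\varphi\to\psi)\to(\square\varphi\to\square\psi)$; 4: $\square\varphi\to\square\square\varphi$; ${\rm Next}_\neg$: $\neg\bigcirc\varphi\leftrightarrow\bigcirc\neg\varphi$; ${\rm Next}_\wedge$: $\bigcirc(\varphi\wedge\psi)\leftrightarrow\bigcirc\varphi\wedge\bigcirc\psi$; C: $\bigcirc\varphi\wedge\bigcirc\square\varphi\to\square\bigcirc\varphi$; rules modus ponens, ${\rm Nec}_\square$, ${\rm Nec}_\bigcirc$. $\mathbf{K4C}$ is axiomatised by Taut, K, 4, ${\rm Next}_\neg$, ${\rm Next}_\wedge$, C and closed under these rules. A $T_D$ space is a topological space in which every singleton $\{x\}$ equals $U\cap F$ for some open $U$ and closed $F$. A dynamic topological system (DTS) is $\langle X,\tau,f\rangle$ with $f\colon X\to X$ continuous. The Cantor derivative $d(A)$ of $A\subseteq X$ is the set of $x$ in the closure of $A\setminus\{x\}$. Under a valuation $\nu\colon\mathsf{PV}\to\wp(X)$: $\|p\|=\nu(p)$,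 $\|\neg\varphi\|=X\setminus\|\varphi\|$, $\|\varphi\wedge\psi\|=\|\varphi\|\cap\|\psi\|$, $\|\square\varphi\|=X\setminus d(\|\neg\varphi\|)$, $\|\bigcirc\varphi\|=f^{-1}(\|\varphi\|)$. Valid on a DTS means the truth set is $X$ under every valuation. *)

From HB Require Import structures.
From mathcomp Require Import all_boot all_order.
From mathcomp Require Import boolp classical_sets topology.

Set Implicit Arguments.
Unset Strict Implicit.
Unset Printing Implicit Defensive.

Local Open Scope classical_set_scope.

Inductive form (PV : Type) : Type :=
| Var  : PV -> form PV
| And  : form PV -> form PV -> form PV
| Neg  : form PV -> form PV
| Box  : form PV -> form PV
| Next : form PV -> form PV.

Arguments Var {PV} _.
Arguments And {PV} _ _.
Arguments Neg {PV} _.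
Arguments Box {PV} _.
Arguments Next {PV} _.

Definition Imp {PV} (a b : form PV) : form PV := Neg (And a (Neg b)).
Definition Iff {PV} (a b : form PV) : form PV := And (Imp a b) (Imp b a).

Fixpoint beval {PV} (v : form PV -> bool) (a : form PV) : bool :=
  match a with
  | Var _ => v a
  | And b c => beval v b && beval v c
  | Neg b => ~~ beval v b
  | Box _ => v a
  | Next _ => v a
  end.

(* Taut: the formula is an instance of a classical propositional tautology. *)
Definition tautology {PV} (a : form PV) : Prop := forall v, beval v a = true.

Inductive K4C {PV : Type} : form PV -> Prop :=
| ax_taut : forall a, tautology a -> K4C a
| ax_K : forall a b, K4C (Imp (Box (Imp a b)) (Imp (Box a) (Box b)))
| ax_4 : forall a, K4C (Imp (Box a) (Box (Box a)))
| ax_next_neg : forall a, K4C (Iff (Neg (Next a)) (Next (Neg a)))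
| ax_next_and : forall a b, K4C (Iff (Next (And a b)) (And (Next a) (Next b)))
| ax_C : forall a, K4C (Imp (And (Next a) (Next (Box a))) (Box (Next a)))
| rule_mp : forall a b, K4C (Imp a b) -> K4C a -> K4C b
| rule_nec_box : forall a, K4C a -> K4C (Box a)
| rule_nec_next : forall a, K4C a -> K4C (Next a).

Definition cantor_deriv {X : topologicalType} (A : set X) : set X :=
  [set x | closure (A `\ x) x].

Definition T_D_space (X : topologicalType) : Prop :=
  forall x : X, exists U F : set X, open U /\ closed F /\ [set x] = U `&` F.

Fixpoint dsem {PV} {X : topologicalType} (f : X -> X) (nu : PV -> set X)
    (a : form PV) : set X :=
  match a with
  | Var p => nu p
  | And b c => dsem f nu b `&` dsem f nu c
  | Neg b => ~` dsem f nu b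
  | Box b => ~` cantor_deriv (~` dsem f nu b)
  | Next b => f @^-1` dsem f nu b
  end.

Definition valid_on {PV} {X : topologicalType} (f : X -> X) (a : form PV) : Prop :=
  forall nu : PV -> set X, dsem f nu a = setT.

(* Soundness is checked axiom by axiom from elementary properties of the
   Cantor derivative d: it is monotone, d(A u B) <= d A u d B, d(set0) = set0,
   d(d A) <= d A in a T_D space (axiom 4), and for continuous f a point of
   d(f^-1 A) outside f^-1 A is mapped into d A (axiom C).

   Completeness goes through the canonical model.  Maximal consistent sets
   (obtained by a Lindenbaum argument via Zorn's lemma) form a transitive
   Kripke frame wR with a function wnext (G |-> {a | Next a in G}); axiom C
   makes wnext "weakly monotone": wR u v implies wR (wnext u) (wnext v) or
   wnext u = wnext v.  This frame is unravelled into a tree of finite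
   wR-chains ordered by extension; its up-set (Alexandroff) topology is T_D,
   the Cantor derivative becomes "some strict extension", and applying wnext
   pointwise (merging repeated worlds) is a continuous map.  The truth lemma
   in this system refutes every non-theorem. *)

From HB Require Import structures.
From mathcomp Require Import all_boot all_order.
From mathcomp Require Import boolp classical_sets topology.
From mathcomp Require Import zify.

Set Implicit Arguments.
Unset Strict Implicit.
Unset Printing Implicit Defensive.
Local Open Scope classical_set_scope.

Ltac taut := let v := fresh "v" in intro v; rewrite /Imp /Iff /=;
  repeat match goal with
  | |- context [beval v ?x] => destruct (beval v x)
  | |- context [v ?x] => destruct (v x)
  end; reflexivity.

Section Logic.
Variables (PV : Type) (p0 : PV).
Notation form := (form PV).
Notation thm := (@K4C PV).

(* A fixed theorem, used as the empty conjunction; this is where a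
   propositional variable p0 is needed. *)
Definition Tt : form := Imp (Var p0) (Var p0).

Lemma thm_Tt : thm Tt. Proof. by apply: ax_taut; taut. Qed.

Lemma taut_mp a b : tautology (Imp a b) -> thm a -> thm b.
Proof. by move=> H; apply: rule_mp; apply: ax_taut. Qed.

Lemma taut_mp2 a b c : tautology (Imp a (Imp b c)) -> thm a -> thm b -> thm c.
Proof. by move=> H Ha; apply: rule_mp; apply: rule_mp Ha; apply: ax_taut. Qed.

Fixpoint conj (l : seq form) : form :=
  match l with [::] => Tt | a :: l => And a (conj l) end.

Fixpoint all_in (S : set form) (l : seq form) : Prop :=
  match l with [::] => True | a :: l => S a /\ all_in S l end.

Definition consistent (S : set form) :=
  forall l, all_in S l -> ~ thm (Neg (conj l)).

Definition MCS (G : set form) := consistent G /\ forall a, G a \/ G (Neg a).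

Lemma all_in_mono (S T : set form) l : S `<=` T -> all_in S l -> all_in T l.
Proof. by move=> ST; elim: l => //= a l IH [Sa Sl]; split; [apply: ST|apply: IH]. Qed.

Lemma all_in_cat S l1 l2 : all_in S l1 -> all_in S l2 -> all_in S (l1 ++ l2).
Proof. by elim: l1 => //= a l IH [Sa Sl] S2; split => //; apply: IH. Qed.

Lemma all_in_map (f : form -> form) G l :
  all_in (fun a => G (f a)) l -> all_in G (map f l).
Proof. by elim: l => //= a l IH [Ha Hl]; split => //; apply: IH. Qed.

Lemma conj_cat l1 l2 : thm (Iff (conj (l1 ++ l2)) (And (conj l1) (conj l2))).
Proof. by elim: l1 => [|a l IH] /=; [apply: ax_taut|apply: taut_mp IH]; taut. Qed.

Lemma split_added S a l : all_in (S `|` [set a]) l ->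
  exists2 l', all_in S l' & thm (Imp (And a (conj l')) (conj l)).
Proof.
elim: l => [|x l IH] /=.
  by move=> _; exists [::] => //; apply: ax_taut; taut.
move=> [[Sx|->] /IH [l' Sl' H]].
  by exists (x :: l') => //=; apply: taut_mp H; taut.
by exists l' => //; apply: taut_mp H; taut.
Qed.

Lemma refute_of_inconsistent S a : ~ consistent (S `|` [set a]) ->
  exists2 l, all_in S l & thm (Imp (conj l) (Neg a)).
Proof.
move=> /existsNP [l /not_implyP [/split_added [l' Sl' H] /contrapT Hl]].
by exists l' => //; apply: taut_mp2 H Hl; taut.
Qed.

Lemma consistent_add_neg S a :
  (forall l, all_in S l -> ~ thm (Imp (conj l) a)) -> consistent (S `|` [set Neg a]).
Proof.
move=> H; apply: contrapT => /refute_of_inconsistent [l Sl Hl].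
by apply: (H l Sl); apply: taut_mp Hl; taut.
Qed.

Lemma all_in_chain_union S (F : set (set form)) l :
  total_on F subset -> all_in (S `|` \bigcup_(A in F) A) l ->
  exists2 B, F B \/ B = set0 & all_in (S `|` B) l.
Proof.
move=> Ftot; elim: l => [|a l IH] /=; first by exists set0; [right|].
move=> [[Sa|[A FA Aa]] /IH [B FB SB]].
  by exists B => //; split => //; left.
case: FB SB => [FB|->] SB; last first.
  by exists A; [left|split; [right|apply: all_in_mono SB => x [|//]; left]].
have [AB|BA] := Ftot A B FA FB.
  by exists B; [left|split => //; right; apply: AB].
by exists A; [left|split; [right|apply: all_in_mono SB => x [|/BA]; [left|right]]].
Qed.

Lemma consistent_complete G :
  consistent G -> (forall a, consistent (G `|` [set a]) -> G a) -> MCS G.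
Proof.
move=> cG Gmax; split => // a; apply: contrapT => /not_orP [nGa nGna].
have [l1 Gl1 H1] : exists2 l, all_in G l & thm (Imp (conj l) (Neg a)).
  by apply: refute_of_inconsistent => /Gmax /nGa.
have [l2 Gl2 H2] : exists2 l, all_in G l & thm (Imp (conj l) (Neg (Neg a))).
  by apply: refute_of_inconsistent => /Gmax /nGna.
have N : thm (Neg (And (conj l1) (conj l2))) by apply: taut_mp2 H1 H2; taut.
apply: (cG (l1 ++ l2)); first exact: all_in_cat.
by apply: taut_mp2 (conj_cat l1 l2) N; taut.
Qed.

Lemma lindenbaum S : consistent S -> exists2 G, MCS G & S `<=` G.
Proof.
move=> cS.
have [A [cSA Amax]] : exists A, consistent (S `|` A) /\
    forall B, A `<` B -> ~ consistent (S `|` B).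
  apply: Zorn_bigcup => F FP Ftot l /(all_in_chain_union Ftot) [B FB SB].
  case: FB => [/FP|E]; first exact.
  by apply: cS; apply: all_in_mono SB => x; rewrite E => -[].
exists (S `|` A); last by move=> x Sx; left.
apply: consistent_complete => // a cSAa; apply: contrapT => nSAa.
apply: (Amax (A `|` [set a])); last by rewrite setUA.
split; first by move=> x Ax; left.
by move=> /(_ a (or_intror erefl)) Aa; apply: nSAa; right.
Qed.

Lemma mcs_closed G l b : MCS G -> all_in G l -> thm (Imp (conj l) b) -> G b.
Proof.
move=> [cG mG] Gl H; case: (mG b) => // Gnb.
by exfalso; apply: (cG (Neg b :: l)) => //=; apply: taut_mp H; taut.
Qed.

Lemma mcs_thm_mp G a b : MCS G -> thm (Imp a b) -> G a -> G b.
Proof.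
move=> mG H Ga; apply: (mcs_closed (l := [:: a])) => //=.
by apply: taut_mp H; taut.
Qed.

Lemma mcs_taut1 G a b : MCS G -> G a -> tautology (Imp a b) -> G b.
Proof. by move=> mG Ga H; apply: mcs_thm_mp (ax_taut H) Ga. Qed.

Lemma mcs_taut2 G a b c : MCS G -> G a -> G b -> tautology (Imp a (Imp b c)) -> G c.
Proof.
move=> mG Ga Gb H; apply: (mcs_closed (l := [:: a; b])) => //=.
by apply: taut_mp (ax_taut H); taut.
Qed.

Lemma mcs_neg G a : MCS G -> G (Neg a) <-> ~ G a.
Proof.
move=> mG; split; last by case: mG => _ /(_ a) [].
move=> Gna Ga; case: mG => cG _; apply: (cG [:: a; Neg a]) => //=.
by apply: ax_taut; taut.
Qed.

Lemma mcs_and G a b : MCS G -> G (And a b) <-> G a /\ G b.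
Proof.
move=> mG; split; first by move=> H; split; apply: (mcs_taut1 mG H); taut.
by case=> Ga Gb; apply: (mcs_taut2 mG Ga Gb); taut.
Qed.

Definition next_part (G : set form) : set form := [set a | G (Next a)].

Lemma next_conj l : thm (Iff (Next (conj l)) (conj (map Next l))).
Proof.
elim: l => [|a l IH] /=; first by apply: taut_mp2 (rule_nec_next thm_Tt) thm_Tt; taut.
by apply: taut_mp2 (ax_next_and a (conj l)) IH; taut.
Qed.

Lemma mcs_next_part G : MCS G -> MCS (next_part G).
Proof.
move=> mG; split => [l Hl Hn|a].
  have H1 : thm (Neg (Next (conj l))).
    by apply: taut_mp2 (ax_next_neg (conj l)) (rule_nec_next Hn); taut.
  apply: (mG.1 _ (all_in_map Hl)).
  by apply: taut_mp2 (next_conj l) H1; taut.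
case: (mG.2 (Next a)) => H; [by left|right].
by apply: (mcs_thm_mp mG _ H); apply: taut_mp (ax_next_neg a); taut.
Qed.

Definition world := {G : set form | MCS G}.

Definition wnext (w : world) : world :=
  exist _ (next_part (sval w)) (mcs_next_part (svalP w)).

Definition wR (u v : world) := forall a, sval u (Box a) -> sval v a.

Lemma world_eq (u v : world) : sval u = sval v -> u = v.
Proof. by case: u v => [u pu] [v pv] /= E; subst v; congr exist; exact: Prop_irrelevance. Qed.

(* Axiom 4 makes the canonical relation transitive. *)
Lemma wR_trans u v w : wR u v -> wR v w -> wR u w.
Proof.
move=> Ruv Rvw a Ha; apply: Rvw; apply: Ruv.
exact: mcs_thm_mp (svalP u) (ax_4 a) Ha.
Qed.

Lemma box_conj l b : thm (Imp (conj l) b) -> thm (Imp (conj (map Box l)) (Box b)).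
Proof.
elim: l b => [|a l IH] b /= H.
  by apply: taut_mp (rule_nec_box (rule_mp H thm_Tt)); taut.
have H1 : thm (Imp (conj l) (Imp a b)) by apply: taut_mp H; taut.
by apply: taut_mp2 (ax_K a b) (IH _ H1); taut.
Qed.

Lemma box_wR (u : world) b : sval u (Box b) <-> forall v, wR u v -> sval v b.
Proof.
split=> [H v|H]; first exact.
apply: contrapT => nb.
have cS : consistent ([set x | sval u (Box x)] `|` [set Neg b]).
  apply: consistent_add_neg => l Sl Hl; apply: nb.
  exact: mcs_closed (svalP u) (all_in_map Sl) (box_conj Hl).
have [G mG SG] := lindenbaum cS.
have /(mcs_neg _ mG) : G (Neg b) by apply: SG; right.
by apply; apply: (H (exist _ G mG)) => a Ha; apply: SG; left.
Qed.

(* If wnext u and wnext v differ, they disagree on some x; a formula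
   c with Box c at wnext u but not c at wnext v then yields, via C applied to
   Neg (And (Neg x) (Neg c)), a contradiction with wR u v. *)
Lemma wnext_wR u v : wR u v -> wR (wnext u) (wnext v) \/ wnext u = wnext v.
Proof.
move=> Ruv; case: (pselect (wR (wnext u) (wnext v))) => [|nR]; [by left|right].
have [c /not_implyP [Hc nc]] : exists c, ~ (sval (wnext u) (Box c) -> sval (wnext v) c).
  by apply: contrapT => /forallNP H; apply: nR => c; apply: contrapT; apply: H.
have mu := svalP (wnext u); have mv := svalP (wnext v).
have sub x : sval (wnext u) x -> sval (wnext v) x.
  move=> Hx; apply: contrapT => nx.
  pose th := Neg (And (Neg x) (Neg c)).
  have T1 : sval (wnext u) th by apply: (mcs_taut1 mu Hx); taut.
  have T2 : sval (wnext u) (Box th).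
    apply: (mcs_thm_mp mu _ Hc); apply: rule_mp (ax_K c th) _.
    by apply: rule_nec_box; apply: ax_taut; taut.
  have T3 : sval u (Box (Next th)).
    by apply: (mcs_thm_mp (svalP u) (ax_C th)); apply/(mcs_and _ _ (svalP u)).
  have /(mcs_neg _ mv) := Ruv _ T3; apply.
  by apply/(mcs_and _ _ mv); split; apply/(mcs_neg _ mv).
apply: world_eq; apply: funext => x; apply: propext; split; first exact: sub.
move=> Hx; apply: contrapT => /(mcs_neg _ mu) /sub.
by move/(mcs_neg _ mv).
Qed.
End Logic.

Section Derivative.
Variable X : topologicalType.
Implicit Types (A B : set X) (x : X).

Lemma derivE A x : cantor_deriv A x <->
  forall B, nbhs x B -> exists y, [/\ y <> x, A y & B y].
Proof.
rewrite /cantor_deriv /closure /=; split.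
  by move=> H B /H [y [[Ay ny] By]]; exists y.
by move=> H B /H [y [ny Ay By]]; exists y.
Qed.

Lemma notderivE A x : ~ cantor_deriv A x ->
  exists2 B, nbhs x B & forall y, y <> x -> B y -> ~ A y.
Proof.
move=> /derivE /existsNP [B /not_implyP [nB H]]; exists B => // y ny By Ay.
by apply: H; exists y.
Qed.

Lemma deriv_mono A B : A `<=` B -> cantor_deriv A `<=` cantor_deriv B.
Proof.
move=> AB x /derivE H; apply/derivE => N /H [y [ny Ay Ny]].
by exists y; split => //; apply: AB.
Qed.

Lemma deriv0 : cantor_deriv (set0 : set X) = set0.
Proof. by apply/seteqP; split => x //; rewrite /cantor_deriv /= set0D closure0. Qed.

Lemma derivU A B : cantor_deriv (A `|` B) `<=` cantor_deriv A `|` cantor_deriv B.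
Proof.
move=> x dAB; apply: contrapT => /not_orP [/notderivE [NA nA HA] /notderivE [NB nB HB]].
have [y [ny [Ay|By] [NAy NBy]]] := proj1 (derivE _ _) dAB _ (filterI nA nB).
  exact: HA Ay.
exact: HB By.
Qed.

(* In a T_D space, d(d A) <= d A (soundness of 4): write {x} = U n F with U
   open and F closed; points near x in d A lie in the open set U \ F, so
   nearby points of A differ from x. *)
Lemma deriv_idem A : T_D_space X -> cantor_deriv (cantor_deriv A) `<=` cantor_deriv A.
Proof.
move=> TD x ddA; apply/derivE => B.
have [U [F [oU [cF E]]]] := TD x.
have [Ux Fx] : (U `&` F) x by rewrite -E.
rewrite nbhsE => -[N [oN Nx] NB].
have nNU : nbhs x (N `&` U) by apply: open_nbhs_nbhs; split; [exact: openI|].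
have [y [nyx dAy [Ny Uy]]] := proj1 (derivE _ _) ddA _ nNU.
have nFy : ~ F y by move=> Fy; apply: nyx; have : [set x] y by rewrite E; split.
have nM : nbhs y (N `&` U `&` ~` F).
  apply: open_nbhs_nbhs; split; last by split; [split|].
  by apply: openI; [exact: openI|exact: closed_openC].
have [z [nzy Az [[Nz Uz] nFz]]] := proj1 (derivE _ _) dAy _ nM.
by exists z; split => //; [move=> zx; apply: nFz; rewrite zx|apply: NB].
Qed.

End Derivative.

Lemma deriv_preimage (X Y : topologicalType) (f : X -> Y) (A : set Y) x :
  continuous f -> cantor_deriv (f @^-1` A) x -> ~ A (f x) -> cantor_deriv A (f x).
Proof.
move=> fc /derivE dfA nAfx; apply/derivE => B /fc /dfA [y [_ Afy Bfy]].
by exists (f y); split => // efy; apply: nAfx; rewrite -efy.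
Qed.

Section Soundness.
Variables (PV : Type) (X : topologicalType) (f : X -> X).
Implicit Types (a b : form PV) (nu : PV -> set X).

Lemma validP a : valid_on f a <-> forall nu x, dsem f nu a x.
Proof.
split=> [H nu x|H nu]; first by rewrite H.
by apply/seteqP; split => // x _; apply: H.
Qed.

Lemma dsem_imp nu a b x :
  dsem f nu (Imp a b) x <-> (dsem f nu a x -> dsem f nu b x).
Proof.
split=> /= [H Ha|H [Ha nb]]; last exact: nb (H Ha).
by apply: contrapT => nb; apply: H.
Qed.

Lemma beval_dsem nu x a :
  beval (fun b => `[< dsem f nu b x >]) a = `[< dsem f nu a x >].
Proof.
elim: a => //= [b IHb c IHc|b IHb]; first by rewrite IHb IHc asbool_and.
by rewrite IHb asbool_neg.
Qed.

Lemma sound_taut a : tautology a -> valid_on f a.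
Proof.
move=> Ta; apply/validP => nu x.
by have := Ta (fun b => `[< dsem f nu b x >]); rewrite beval_dsem => /asboolP.
Qed.

Lemma sound_K a b : valid_on f (Imp (Box (Imp a b)) (Imp (Box a) (Box b))).
Proof.
apply/validP => nu x; apply/dsem_imp => nKab; apply/dsem_imp => nKa dKb.
have sub : ~` dsem f nu b `<=` ~` dsem f nu (Imp a b) `|` ~` dsem f nu a.
  move=> y nby; apply: contrapT => /not_orP [/contrapT Hab /contrapT Ha].
  exact: nby (proj1 (dsem_imp _ _ _ _) Hab Ha).
by have [] := derivU (deriv_mono sub dKb).
Qed.

Lemma sound_4 a : T_D_space X -> valid_on f (Imp (Box a) (Box (Box a))).
Proof.
move=> TD; apply/validP => nu x; apply/dsem_imp => nKa /= dKKa; apply: nKa.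
by apply: deriv_idem; move: dKKa; rewrite setCK.
Qed.

Lemma sound_C a : continuous f ->
  valid_on f (Imp (And (Next a) (Next (Box a))) (Box (Next a))).
Proof.
move=> fc; apply/validP => nu x; apply/dsem_imp => -[afx nKafx] dfa; apply: nKafx.
exact: (@deriv_preimage _ _ f (~` dsem f nu a) x fc dfa (fun n => n afx)).
Qed.

Lemma sound a : continuous f -> T_D_space X -> K4C a -> valid_on f a.
Proof.
move=> fc TD; elim => {a}.
- exact: sound_taut.
- exact: sound_K.
- by move=> a; apply: sound_4.
- by move=> a; apply/validP => nu x /=; split => -[].
- by move=> a b; apply/validP => nu x /=; split => -[].
- by move=> a; apply: sound_C.
- move=> a b _ /validP Hab _ /validP Ha; apply/validP => nu x.
  exact: (proj1 (dsem_imp _ _ _ _) (Hab nu x) (Ha nu x)).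
- move=> a _ Ha nu /=; by rewrite Ha setCT deriv0 setC0.
- by move=> a _ Ha nu /=; rewrite Ha preimage_setT.
Qed.
End Soundness.

Section Unravelling.
Variables (PV : Type) (p0 : PV).
Notation world := (world p0).

(* chain a t: t lists wR-predecessors of a down to a root, each below the
   previous one.  Points of the unravelled space are such chains, extension
   adds worlds on top, and the tip is the last world added. *)
Fixpoint chain (a : world) (t : seq world) : Prop :=
  match t with [::] => True | b :: t' => wR b a /\ chain b t' end.

Definition point := {p : world * seq world | chain p.1 p.2}.

Definition trace (x : point) : seq world := (sval x).1 :: (sval x).2.
Definition tip (x : point) : world := (sval x).1.

Definition extends (x y : point) := exists zs, trace y = zs ++ trace x.
Definition sextends (x y : point) := exists z zs, trace y = z :: zs ++ trace x.

Lemma point_eq (x y : point) : trace x = trace y -> x = y.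
Proof.
case: x y => [[a t] px] [[b u] py]; rewrite /trace /= => -[E1 E2]; subst b u.
by congr exist; exact: Prop_irrelevance.
Qed.

Lemma extends_refl x : extends x x. Proof. by exists [::]. Qed.

Lemma extends_trans x y z : extends x y -> extends y z -> extends x z.
Proof. by move=> [zs1 E1] [zs2 E2]; exists (zs2 ++ zs1); rewrite E2 E1 catA. Qed.

Lemma extends_antisym x y : extends x y -> extends y x -> x = y.
Proof.
move=> [zs1 E1] [zs2 E2].
have S1 : size (trace y) = size zs1 + size (trace x) by rewrite E1 size_cat.
have S2 : size (trace x) = size zs2 + size (trace y) by rewrite E2 size_cat.
have /size0nil E : size zs1 = 0 by lia.
by apply: point_eq; rewrite E1 E.
Qed.

Lemma sextendsP x y : sextends x y <-> extends x y /\ x <> y.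
Proof.
split=> [[z [zs E]]|[[[|z zs] E] nxy]].
- split; first by exists (z :: zs).
  move=> xy; subst y; have : size (trace x) = (size zs).+1 + size (trace x).
    by rewrite {1}E /= size_cat.
  lia.
- by exfalso; apply: nxy; apply: point_eq.
- by exists z, zs.
Qed.

Lemma chain_wR a zs c u : chain a (zs ++ c :: u) -> wR c a.
Proof.
elim: zs a => [|z zs IH] a /=; first by case.
by move=> [Rza /IH Rcz]; apply: wR_trans Rcz Rza.
Qed.

Lemma sextends_wR x y : sextends x y -> wR (tip x) (tip y).
Proof.
case: y => [[b u] py] [z [zs]]; rewrite /trace /tip /= => -[E1 E2]; subst b u.
exact: chain_wR py.
Qed.

(* The dynamics: apply wnext to every world of the chain, merging
   consecutive repeated worlds; by wnext_wR the result is again a chain. *)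
Fixpoint step (a : world) (t : seq world) : world * seq world :=
  match t with
  | [::] => (wnext a, [::])
  | b :: t' => let p := step b t' in
      if pselect (wnext a = p.1) then p else (wnext a, p.1 :: p.2)
  end.

Lemma step_tip a t : (step a t).1 = wnext a.
Proof. by case: t => //= b t; case: pselect. Qed.

Lemma step_chain a t : chain a t -> chain (step a t).1 (step a t).2.
Proof.
elim: t a => // b t IH a /= [Rba cb].
case: pselect => [_|ne] /=; first exact: IH cb.
split; last exact: IH cb.
rewrite !step_tip in ne *.
by case: (wnext_wR Rba) => // E; exfalso; apply: ne.
Qed.

Lemma step_suffix a t zs c u : a :: t = zs ++ c :: u ->
  exists zs', (step a t).1 :: (step a t).2 = zs' ++ (step c u).1 :: (step c u).2.
Proof.
elim: zs a t => [|z zs IH] a t /=; first by move=> [-> ->]; exists [::].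
case: t => [|b t] [Ea Et].
  by move/(f_equal size): Et; rewrite size_cat /=; lia.
have [zs' E] := IH _ _ Et; rewrite /=; case: pselect => _ /=.
  by exists zs'.
by exists (wnext a :: zs'); rewrite E.
Qed.

Definition shift (x : point) : point :=
  exist _ (step (sval x).1 (sval x).2) (step_chain (svalP x)).

Lemma shift_extends x y : extends x y -> extends (shift x) (shift y).
Proof. by move=> [zs /step_suffix [zs' E]]; exists zs'. Qed.

Lemma tip_shift x : tip (shift x) = wnext (tip x).
Proof. exact: step_tip. Qed.

Definition upset (U : set point) := forall x y, extends x y -> U x -> U y.

Lemma upsetT : upset setT. Proof. by []. Qed.

Lemma upsetI : setI_closed upset.
Proof. by move=> A B oA oB x y exy [Ax Bx]; split; [apply: (oA x)|apply: (oB x)]. Qed.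

Lemma upset_bigcup (I : Type) (F : I -> set point) :
  (forall i, upset (F i)) -> upset (\bigcup_i F i).
Proof. by move=> H x y exy [i _ Fx]; exists i => //; apply: (H i x). Qed.

Lemma upset_extends x : upset (extends x).
Proof. by move=> y z eyz exy; apply: extends_trans exy eyz. Qed.
End Unravelling.

HB.instance Definition _ (PV : Type) (p0 : PV) := gen_eqMixin (point p0).
HB.instance Definition _ (PV : Type) (p0 : PV) := gen_choiceMixin (point p0).
HB.instance Definition _ (PV : Type) (p0 : PV) :=
  isOpenTopological.Build (point p0) (@upsetT PV p0) (@upsetI PV p0)
    (@upset_bigcup PV p0).

Section Completeness.
Variables (PV : Type) (p0 : PV).
Notation X := (point p0).

Lemma open_upset (U : set X) : open U <-> upset U.
Proof. by []. Qed.

Lemma deriv_point (A : set X) x : cantor_deriv A x <-> exists2 y, sextends x y & A y.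
Proof.
rewrite /cantor_deriv /closure /=; split.
  have nx : nbhs x (extends x).
    rewrite nbhsE; exists (extends x) => //.
    by split; [apply/open_upset/upset_extends|apply: extends_refl].
  move=> /(_ _ nx) [y [[Ay nyx] exy]]; exists y => //.
  by apply/sextendsP; split => // E; apply: nyx; rewrite E.
move=> [y /sextendsP [exy nxy] Ay] B; rewrite nbhsE => -[C [/open_upset oC Cx] CB].
by exists y; split; [split=> // E; apply: nxy|apply: CB; apply: (oC x)].
Qed.

Lemma shift_continuous : continuous (@shift PV p0).
Proof.
apply/continuousP => A /open_upset oA; apply/open_upset => x y exy Afx.
exact: oA _ _ (shift_extends exy) Afx.
Qed.

Lemma point_T_D : T_D_space X.
Proof.
move=> x; exists (extends x), (fun y => extends y x); split; first exact/open_upset/upset_extends.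
split.
  rewrite -openC; apply/open_upset => y z eyz nyx ezx.
  by apply: nyx; apply: extends_trans eyz ezx.
apply/seteqP; split => y; first by move=> ->; split; apply: extends_refl.
by move=> [H1 H2]; apply: extends_antisym.
Qed.

Definition tip_val (p : PV) : set X := fun x => sval (tip x) (Var p).

Lemma truth_lemma (a : form PV) x : dsem (@shift PV p0) tip_val a x <-> sval (tip x) a.
Proof.
elim: a x => [p|a IHa b IHb|a IHa|a IHa|a IHa] x /=.
- by [].
- by rewrite IHa IHb (mcs_and _ _ (svalP (tip x))).
- by rewrite IHa (mcs_neg _ (svalP (tip x))).
- have -> : dsem (@shift PV p0) tip_val a = fun y => sval (tip y) a.
    by apply: funext => y; apply: propext.
  rewrite box_wR; split=> [H v Rv|H /deriv_point [y sxy]]; last by apply; apply/H/sextends_wR.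
  apply: contrapT => nv; apply: H; apply/deriv_point.
  have cy : chain v (tip x :: (sval x).2) by split => //; exact: (svalP x).
  by exists (exist _ (v, tip x :: (sval x).2) cy) => //; exists v, [::].
- by rewrite /preimage /= IHa tip_shift.
Qed.

Lemma complete (a : form PV) :
  (forall (Y : topologicalType) (f : Y -> Y), continuous f -> T_D_space Y -> valid_on f a) ->
  K4C a.
Proof.
move=> H; apply: contrapT => na.
have cS : consistent p0 (set0 `|` [set Neg a]).
  apply: consistent_add_neg => -[_ Ha|b l [[]]].
  by apply: na; apply: rule_mp Ha (thm_Tt p0).
have [G mG SG] := lindenbaum cS.
pose x : X := exist _ (exist _ G mG, [::]) I.
have valid := H X (@shift PV p0) shift_continuous point_T_D.
have := proj1 (validP _ _) valid tip_val x.
move/truth_lemma => /=; apply/(mcs_neg _ mG).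
by apply: SG; right.
Qed.
End Completeness.

Theorem mainTheorem5 (PV : Type) (p0 : PV) (phi : form PV) :
  K4C phi <->
  (forall (X : topologicalType) (f : X -> X),
      continuous f -> T_D_space X -> valid_on f phi).
Proof.
split=> [H X f fc TD|]; first exact: sound fc TD H.
exact: complete.
Qed.
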